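(* Let $k=k(N)=o(N)$ and consider the $S_k$ shuffle with boundary rates $\delta_j\in[0,1]$, $2\le j\le k-1$. There exists an absolute constant $C>0$ such that for all $N$ sufficiently large and all $x\in[k,2k]$, $E_x[\tilde\tau_{>4k}]\le C/\sqrt k$.
   Context: The $S_k$ shuffle with boundary rates $(\delta_j)$: on $N$ cards, each block of $k$ consecutive positions is uniformly reshuffled at rate 1, and for each $2\le j\le k-1$ the first $j$ cards and the last $j$ cards are each uniformly reshuffled at rate $\delta_j$. Let $Z_{1,t}$ be the position at time $t$ of the card with label 1; $(Z_{1,t})_{t\ge0}$ is itself a Markov chain on $[N]$, and $P_x$ (with expectation $E_x$) denotes its law when $Z_{1,0}=x$. For $y\in[N]$, $\tilde\tau_{>y}=\inf\{t\ge0:Z_{1,t}>y\}$ and $\tilde\tau_{<y}=\inf\{t\ge0:Z_{1,t}<y\}$. *)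

From HB Require Import structures.
From mathcomp Require Import all_boot all_order all_algebra.
From mathcomp Require Import all_classical all_reals all_analysis.
Set Implicit Arguments. Unset Strict Implicit. Unset Printing Implicit Defensive.
Import Order.TTheory GRing.Theory Num.Theory.
Local Open Scope ring_scope.

(* A "block" is a triple (lo, hi, rate): the positions lo..hi are uniformly
   reshuffled at rate [rate] (by an independent Poisson clock).
   - interior blocks: (i, i+k-1, 1) for 1 <= i <= N-k+1;
   - boundary blocks: (1, j, delta j) and (N-j+1, N, delta j) for 2 <= j <= k-1. *)
Section Sk.
Variable R : realType.

Definition Sk_blocks (N k : nat) (delta : nat -> R) : seq (nat * nat * R) :=
  [seq (i, (i + k - 1)%N, 1) | i <- iota 1 (N - k + 1)]
  ++ [seq (1%N, j, delta j) | j <- iota 2 (k - 2)]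
  ++ [seq ((N - j + 1)%N, N, delta j) | j <- iota 2 (k - 2)].

Definition Sk_total_rate (N k : nat) (delta : nat -> R) : R :=
  \sum_(b <- Sk_blocks N k delta) b.2.

Definition in_block (b : nat * nat * R) (x : nat) : bool :=
  (b.1.1 <= x <= b.1.2)%N.

(* Transition kernel of Z_1 observed at the successive reshuffling events
   (graphical/Poisson-clock construction): at each event a block b is chosen
   with probability rate(b)/Lambda; if card 1 is in b its new position is
   uniform in b, otherwise it stays put. *)
Definition Sk_kernel (N k : nat) (delta : nat -> R) (x z : nat) : R :=
  \sum_(b <- Sk_blocks N k delta)
    (b.2 / Sk_total_rate N k delta) *
    (if in_block b x then
       (if in_block b z then ((b.1.2 - b.1.1).+1)%:R^-1 else 0)
     else (if z == x then 1 else 0)).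

(* surv n x = P_x(Z_1 stays <= y during the first n events), for x in [N] *)
Fixpoint Sk_surv (N k : nat) (delta : nat -> R) (y : nat) (n : nat) (x : nat) : R :=
  match n with
  | 0 => if (x <= y)%N then 1 else 0
  | n'.+1 => if (x <= y)%N then
               \sum_(1 <= z < N.+1) Sk_kernel N k delta x z * Sk_surv N k delta y n' z
             else 0
  end.

(* E_x[tilde tau_{>y}] for the continuous-time chain Z_1: the number T of
   reshuffling events up to the hitting time satisfies E_x[T] = sum_n P_x(T > n),
   and the events form a Poisson process of rate Lambda independent of the
   jumps, so E_x[tilde tau_{>y}] = E_x[T] / Lambda (possibly +oo). *)
Definition Sk_exp_hit_gt (N k : nat) (delta : nat -> R) (y x : nat) : \bar R :=
  (\sum_(0 <= n <oo) (Sk_surv N k delta y n x / Sk_total_rate N k delta)%:E)%E.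

End Sk.

From HB Require Import structures.
From mathcomp Require Import all_boot all_order all_algebra.
From mathcomp Require Import all_classical all_reals all_analysis.
From mathcomp Require Import ring lra zify.
Set Implicit Arguments. Unset Strict Implicit. Unset Printing Implicit Defensive.
Import Order.TTheory GRing.Theory Num.Theory numFieldNormedType.Exports.
Local Open Scope classical_set_scope.
Local Open Scope ring_scope.

(* Observed at its reshuffling events, the position of card 1 is a Markov chain
   with a symmetric kernel, and E_x[tau_{>4k}] is 1/Lambda times the expected
   number of steps this chain survives when killed on leaving [1, 4k].  Split
   every step according to whether the chain is above or below a level M.
   The steps above M are paid for by the potential ((5k)^2 - z^2) / (M v),
   where v = (k^2 - 1)/12 is the variance of a uniform site of a block of k:
   each of the min(z, k) interior blocks through z lowers (5k)^2 - z^2 by v on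
   average, up to first-order terms that vanish for z >= k and for z < k
   absorb the contribution of the left boundary blocks, so the drift is at most
   -min(z, k)/M <= -1 above M.  By reversibility the steps below M equal the
   expected time that chains started at 1, ..., M spend at x, which the
   indicator of x (x >= k) corrected by the quadratic potential bounds by
   O(1/k) per starting point.  The total O(1/M + M/k) is O(1/sqrt k) for
   M = floor(sqrt k). *)

Section NatSums.
Variable V : nmodType.

Lemma sum_nat_window (F : nat -> V) m n lo hi :
  (m <= lo)%N -> (hi < n)%N ->
  \sum_(m <= u < n) (if (lo <= u <= hi)%N then F u else 0) = \sum_(lo <= u < hi.+1) F u.
Proof.
move=> le_m_lo lt_hi_n.
rewrite -big_mkcond (big_nat_widenl _ _ _ _ _ le_m_lo) (big_nat_widen _ _ _ _ _ lt_hi_n).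
by apply: eq_bigl => u; rewrite ltnS.
Qed.

Lemma sum_nat_indicator (F : nat -> V) m n z :
  (m <= z < n)%N -> \sum_(m <= u < n) (if u == z then F u else 0) = F z.
Proof. by move=> z_in; rewrite -big_mkcond big_nat1_eq z_in. Qed.

Lemma sum_nat_ge_const (c : V) m n z :
  \sum_(m <= j < n) (if (z <= j)%N then c else 0) = c *+ (n - maxn m z).
Proof.
rewrite -big_mkcond -sumr_const_nat (big_nat_widenl _ _ _ _ _ (leq_maxl m z)).
by rewrite big_nat_cond [RHS]big_nat_cond; apply: eq_bigl => j; rewrite geq_max; lia.
Qed.

End NatSums.

Lemma sum_nat_id (R : comNzRingType) p n : 2 * \sum_(p <= u < p + n) (u%:R : R) =
  2 * n%:R * p%:R + n%:R * (n%:R - 1).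
Proof.
elim: n => [|n IH]; first by rewrite addn0 big_geq // mulr0; ring.
by rewrite addnS big_nat_recr ?leq_addr //= mulrDr IH -[n.+1]addn1 !natrD; ring.
Qed.

Lemma sum_nat_sqr (R : comNzRingType) p n : 6 * \sum_(p <= u < p + n) (u%:R : R) ^+ 2 =
  6 * n%:R * p%:R ^+ 2 + 6 * p%:R * n%:R * (n%:R - 1) + n%:R * (n%:R - 1) * (2 * n%:R - 1).
Proof.
elim: n => [|n IH]; first by rewrite addn0 big_geq // mulr0; ring.
by rewrite addnS big_nat_recr ?leq_addr //= mulrDr IH -[n.+1]addn1 !natrD; ring.
Qed.

Lemma sum_nat_indicator_le1 (R : numDomainType) m n x : \sum_(m <= u < n) ((u == x)%:R : R) <= 1.
Proof.
rewrite (eq_bigr (fun u => if u == x then 1 else 0)) => [|u _]; last by case: eqP.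
by rewrite -big_mkcond big_nat1_eq; case: ifP.
Qed.

Section KilledKernel.
Variables (R : numDomainType) (L : nat) (K : nat -> nat -> R).

Definition kact (h : nat -> R) (x : nat) : R := \sum_(1 <= u < L.+1) K x u * h u.

Definition kdot (f g : nat -> R) : R := \sum_(1 <= u < L.+1) f u * g u.

Lemma kact_sum (I : Type) (r : seq I) (F : I -> nat -> R) x :
  \sum_(i <- r) kact (F i) x = kact (fun u => \sum_(i <- r) F i u) x.
Proof.
rewrite /kact exchange_big /=; apply: eq_bigr => u _.
by rewrite big_distrr.
Qed.

Lemma kdot_indicator h x : (1 <= x <= L)%N -> kdot (fun u => (u == x)%:R) h = h x.
Proof.
move=> x_in; rewrite /kdot -[RHS](@sum_nat_indicator _ h 1 L.+1 x) ?ltnS //.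
by apply: eq_bigr => u _; case: eqP; rewrite ?mul1r ?mul0r.
Qed.

Hypothesis K_sym : forall x u, K x u = K u x.

Lemma kdot_kact f g : kdot f (kact g) = kdot (kact f) g.
Proof.
rewrite /kdot /kact.
under eq_bigr do rewrite big_distrr.
under [RHS]eq_bigr do rewrite big_distrl.
rewrite exchange_big /=; apply: eq_bigr => u _; apply: eq_bigr => w _.
by rewrite K_sym; ring.
Qed.

Lemma kdot_iter_kact n f g : kdot f (iter n kact g) = kdot (iter n kact f) g.
Proof.
elim: n f => [//|n IH] f.
by rewrite iterS kdot_kact IH iterSr.
Qed.

(* Reversibility: the mass that the chain started at [x] puts on [g] equals the
   mass that the chains started in [g] put on [x]. *)
Lemma iter_kact_split n f g x : (1 <= x <= L)%N ->
  (forall u, (1 <= u <= L)%N -> f u + g u = 1) ->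
  iter n kact (fun=> 1) x = iter n kact f x + kdot g (iter n kact (fun u => (u == x)%:R)).
Proof.
move=> x_in fg1.
rewrite -(kdot_indicator (iter n kact (fun=> 1)) x_in) -(kdot_indicator (iter n kact f) x_in).
rewrite [kdot _ (iter n kact (fun=> 1))]kdot_iter_kact [kdot _ (iter n kact f)]kdot_iter_kact.
rewrite /kdot -big_split /=.
by apply: eq_big_nat => u u_in; rewrite [g u * _]mulrC -mulrDr fg1.
Qed.

Hypothesis K_ge0 : forall x u, 0 <= K x u.

Lemma kact_le f g x : (forall u, (1 <= u <= L)%N -> f u <= g u) -> kact f x <= kact g x.
Proof.
move=> le_fg; apply: ler_sum_nat => u u_in.
by apply: ler_wpM2l => //; apply: le_fg; lia.
Qed.

Lemma sum_iter_kact_le (W f : nat -> R) n x :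
  (forall u, (1 <= u <= L)%N -> 0 <= W u) ->
  (forall u, (1 <= u <= L)%N -> f u + kact W u <= W u) ->
  (1 <= x <= L)%N -> \sum_(0 <= m < n) iter m kact f x <= W x.
Proof.
move=> W_ge0 drift; elim: n x => [|n IH] x x_in; first by rewrite big_geq ?W_ge0.
rewrite big_nat_recl //= kact_sum; apply: le_trans (drift x x_in).
by rewrite lerD2l; apply: kact_le.
Qed.

End KilledKernel.

(* The variance of the uniform law on [k] consecutive integers. *)
Definition block_var (R : numFieldType) (k : nat) : R := (k%:R ^+ 2 - 1) / 12.

Lemma potential_bound_sqrt_le (R : rcfType) (k M : nat) : (2 <= k)%N ->
  M%:R <= Num.sqrt (k%:R : R) < M.+1%:R ->
  (5 * k)%:R ^+ 2 / (M%:R * block_var R k)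
  + M%:R * ((5 * k)%:R ^+ 2 / (k%:R ^+ 2 * block_var R k) + k%:R^-1)
  <= 1201 / Num.sqrt (k%:R : R).
Proof.
move=> k_ge2; rewrite /block_var natrM.
set K : R := k%:R; set m : R := M%:R; set s := Num.sqrt K.
rewrite -natr1 -/m => /andP[m_le_s s_lt_m1].
have K_ge2 : 2 <= K by rewrite /K ler_nat.
have s_gt0 : 0 < s by rewrite sqrtr_gt0; lra.
have sK : s ^+ 2 = K by rewrite sqr_sqrtr //; lra.
have m_ge1 : 1 <= m.
  have : (1 : R) < M.+1%:R by rewrite -natr1 -/m; nra.
  by rewrite ltr1n ltnS /m ler1n.
have s_le2m : s <= 2 * m by lra.
have m_gt0 : 0 < m by lra.
set c := (K ^+ 2 - 1) / 12.
have c_gt0 : 0 < c by rewrite divr_gt0 //; nra.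
have K2_le_16c : K ^+ 2 <= 16 * c by rewrite /c; nra.
have ms_le : m * s <= K by nra.
have K_le_16c : K <= 16 * c by nra.
have far_le : (5 * K) ^+ 2 / (m * c) <= 800 / s.
  rewrite ler_pdivrMr ?(mulr_gt0 m_gt0 c_gt0) // mulrAC ler_pdivlMr //; nra.
have near_le : m * ((5 * K) ^+ 2 / (K ^+ 2 * c)) <= 400 / s.
  have K2c_gt0 : 0 < K ^+ 2 * c by rewrite mulr_gt0 // exprn_gt0 //; lra.
  rewrite mulrA ler_pdivrMr // mulrAC ler_pdivlMr //.
  have := ler_wpM2l (sqr_ge0 K) ms_le; have := ler_wpM2l (sqr_ge0 K) K_le_16c.
  nra.
have self_le : m * K^-1 <= 1 / s.
  rewrite ler_pdivrMr; last lra.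
  rewrite mulrAC ler_pdivlMr //; nra.
by rewrite mulrDr; lra.
Qed.

Section SkShuffle.
Variables (R : realType) (N k : nat) (d : nat -> R).
Hypothesis k_ge2 : (2 <= k)%N.
Hypothesis N_gt5k : (5 * k < N)%N.
Hypothesis d01 : forall j, (2 <= j <= k - 1)%N -> 0 <= d j <= 1.

Local Notation blocks := (Sk_blocks N k d).
Local Notation rate := (Sk_total_rate N k d).
Local Notation K := (Sk_kernel N k d).
Local Notation block_var := (block_var R k).

Lemma Sk_blocksP b : b \in blocks ->
  [/\ (1 <= b.1.1)%N, (b.1.1 <= b.1.2)%N, (b.1.2 <= N)%N & 0 <= b.2].
Proof.
rewrite /Sk_blocks !mem_cat => /or3P[] /mapP[j]; rewrite mem_iota => j_in -> /=.
- by split => //; lia.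
- by split; [lia | lia | lia | case/andP: (d01 (j := j) ltac:(lia))].
- by split; [lia | lia | lia | case/andP: (d01 (j := j) ltac:(lia))].
Qed.

Lemma Sk_total_rate_gt0 : 0 < rate.
Proof.
rewrite /Sk_total_rate /Sk_blocks !big_cat /= !big_map.
rewrite big_const_seq count_predT iter_addr_0 size_iota.
have boundary_ge0 (F : nat -> nat * nat * R) : (forall j, (F j).2 = d j) ->
    0 <= \sum_(j <- iota 2 (k - 2)) (F j).2.
  move=> FE; rewrite big_seq; apply: sumr_ge0 => j; rewrite mem_iota FE => j_in.
  by case/andP: (d01 (j := j) ltac:(lia)).
by rewrite ltr_pwDl ?addr_ge0 ?boundary_ge0 ?pmulrn_rgt0 //; lia.
Qed.

Lemma Sk_kernel_ge0 x z : 0 <= K x z.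
Proof.
rewrite /Sk_kernel big_seq; apply: sumr_ge0 => b /Sk_blocksP[_ _ _ rate_b_ge0].
rewrite mulr_ge0 ?divr_ge0 ?(ltW Sk_total_rate_gt0) //.
by do 2 case: ifP => _ //.
Qed.

Lemma Sk_kernel_sym x z : K x z = K z x.
Proof.
rewrite /Sk_kernel; apply: eq_bigr => b _; congr (_ * _).
have [-> // | _] := eqVneq x z.
by case: (in_block b x); case: (in_block b z).
Qed.

Definition block_avg (h : nat -> R) (lo hi : nat) : R :=
  (\sum_(lo <= u < hi.+1) h u) / (hi - lo).+1%:R.

(* [rate * (Sk_kernel h - h)] is the generator of the continuous-time chain. *)
Definition Sk_gen (h : nat -> R) (z : nat) : R :=
  \sum_(b <- blocks) b.2 * (if in_block b z then block_avg h b.1.1 b.1.2 - h z else 0).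

Lemma Sk_kernel_expand h z : (1 <= z <= N)%N ->
  \sum_(1 <= u < N.+1) K z u * h u = h z + Sk_gen h z / rate.
Proof.
move=> z_in; have rate_neq0 : rate != 0 by rewrite gt_eqF // Sk_total_rate_gt0.
have hzE : h z = \sum_(b <- blocks) b.2 / rate * h z.
  by rewrite -big_distrl -big_distrl /= divff // mul1r.
rewrite /Sk_kernel; under eq_bigr do rewrite big_distrl /=.
rewrite exchange_big {1}hzE /Sk_gen big_distrl -big_split /=.
apply: eq_big_seq => b /Sk_blocksP[lo_ge1 lo_le_hi hi_leN _].
case: (in_block b z).
- rewrite (eq_bigr (fun i => b.2 / rate / (b.1.2 - b.1.1).+1%:R *
      (if (b.1.1 <= i <= b.1.2)%N then h i else 0))); last first.
    by move=> i _; rewrite /in_block; case: ifP => _; rewrite ?mulr0 ?mul0r ?mulrA.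
  by rewrite -big_distrr sum_nat_window //= /block_avg; ring.
- rewrite mulr0 mul0r addr0 -(@sum_nat_indicator _ (fun i => b.2 / rate * h i) 1 N.+1 z) //.
  by apply: eq_bigr => i _; case: eqP; rewrite ?mulr1 ?mulr0 ?mul0r.
Qed.

Lemma Sk_genD f g z : Sk_gen (fun w => f w + g w) z = Sk_gen f z + Sk_gen g z.
Proof.
rewrite /Sk_gen -big_split /=; apply: eq_bigr => b _.
by case: ifP => _; rewrite /block_avg ?big_split /=; ring.
Qed.

Lemma Sk_genZ a f z : Sk_gen (fun w => a * f w) z = a * Sk_gen f z.
Proof.
rewrite /Sk_gen big_distrr /=; apply: eq_bigr => b _.
by case: ifP => _; rewrite /block_avg -?big_distrr /=; ring.
Qed.

Lemma Sk_surv_gt y n z : (y < z)%N -> Sk_surv N k d y n z = 0.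
Proof. by case: n => [|n] /= lt_yz; rewrite leqNgt lt_yz. Qed.

Lemma Sk_surv_iter y n x : (y <= N)%N -> (x <= y)%N ->
  Sk_surv N k d y n x = iter n (kact y K) (fun=> 1) x.
Proof.
move=> le_yN; elim: n x => [|n IH] x le_xy /=; rewrite le_xy //.
rewrite (big_cat_nat _ (n := y.+1)) //= [X in _ + X]big1_seq ?addr0.
  by rewrite /kact; apply: eq_big_nat => z z_in; rewrite IH //; lia.
by move=> z /andP[_]; rewrite mem_index_iota => /andP[lt_yz _]; rewrite Sk_surv_gt ?mulr0.
Qed.

Lemma Sk_surv_ge0 y n x : 0 <= Sk_surv N k d y n x.
Proof.
elim: n x => [|n IH] x /=; case: ifP => // _.
by apply: sumr_ge0 => z _; rewrite mulr_ge0 ?Sk_kernel_ge0.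
Qed.

Lemma Sk_kact_drift y (V f : nat -> R) x : (y <= N)%N ->
  (forall u, 0 <= V u) -> Sk_gen V x <= - f x -> (1 <= x <= y)%N ->
  f x + kact y K (fun u => rate * V u) x <= rate * V x.
Proof.
move=> le_yN V_ge0 gen_le x_in.
have rate_gt0 := Sk_total_rate_gt0.
have kact_le : kact y K (fun u => rate * V u) x <= \sum_(1 <= u < N.+1) K x u * (rate * V u).
  rewrite /kact (big_cat_nat _ (n := y.+1) (p := N.+1)) //= lerDl.
  by apply: sumr_ge0 => u _; rewrite mulr_ge0 ?Sk_kernel_ge0 ?mulr_ge0 ?(ltW rate_gt0).
rewrite addrC -lerBrDr; apply: le_trans kact_le _.
under eq_bigr do rewrite mulrCA.
rewrite -big_distrr /= Sk_kernel_expand; last by lia.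
by rewrite mulrDr mulrCA divff ?mulr1 ?gt_eqF // lerD2l.
Qed.

Lemma Sk_gen_left h z : (1 <= z <= 4 * k)%N -> Sk_gen h z =
  \sum_(maxn 1 (z + 1 - k) <= i < z.+1) (block_avg h i (i + k - 1) - h z)
  + \sum_(2 <= j < k) (if (z <= j)%N then d j * (block_avg h 1 j - h z) else 0).
Proof.
move=> /andP[z_ge1 z_le4k]; rewrite /Sk_gen /Sk_blocks !big_cat /= !big_map.
rewrite [X in _ + (_ + X)]big1_seq ?addr0; last first.
  move=> j /andP[_]; rewrite mem_iota => j_in; rewrite /in_block /= ifF ?mulr0 //.
  by apply/negbTE/negP => /andP[? _]; lia.
congr (_ + _); last first.
  by apply: eq_bigr => j _; rewrite /in_block /= z_ge1 /=; case: ifP; rewrite ?mulr0.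
have -> : iota 1 (N - k + 1) = index_iota 1 (N - k + 2) by rewrite /index_iota; congr iota; lia.
rewrite -(@sum_nat_window _ _ 1 (N - k + 2)); [|lia|lia].
apply: eq_big_nat => i /andP[i_ge1 _]; rewrite mul1r /in_block /=.
by congr (if _ then _ else _); apply/idP/idP => /andP[? ?]; apply/andP; split; lia.
Qed.

Lemma block_var_gt0 : 0 < block_var.
Proof.
have k_ge2R : (2 : R) <= k%:R by rewrite ler_nat.
by rewrite /block_var divr_gt0 //; nra.
Qed.

Lemma block_avg_sqr i :
  block_avg (fun u => u%:R ^+ 2) i (i + k - 1) = (i%:R + (k%:R - 1) / 2) ^+ 2 + block_var.
Proof.
rewrite /block_avg /block_var.
have -> : (i + k - 1).+1 = (i + k)%N by lia.
have -> : (i + k - 1 - i).+1 = k by lia.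
have k_neq0 : (k%:R : R) != 0 by rewrite pnatr_eq0; lia.
have := sum_nat_sqr R i k.
set S := \sum_(i <= u < i + k) _ => S6.
have -> : S = (6 * k%:R * i%:R ^+ 2 + 6 * i%:R * k%:R * (k%:R - 1)
              + k%:R * (k%:R - 1) * (2 * k%:R - 1)) / 6 by rewrite -S6; field.
by field.
Qed.

(* Every block meeting [1, 4k] lies in [1, 5k], where [quad_pot] is quadratic. *)
Definition quad_pot (w : nat) : R :=
  if (w <= 5 * k)%N then (5 * k)%:R ^+ 2 - w%:R ^+ 2 else 0.

Lemma quad_potE w : (w <= 5 * k)%N -> quad_pot w = (5 * k)%:R ^+ 2 - w%:R ^+ 2.
Proof. by move=> le_w5k; rewrite /quad_pot le_w5k. Qed.

Lemma quad_pot_ge0 w : 0 <= quad_pot w.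
Proof.
rewrite /quad_pot; case: ifP => // le_w5k.
by rewrite subr_ge0 ler_pXn2r ?nnegrE ?ler_nat.
Qed.

Lemma quad_pot_le w : quad_pot w <= (5 * k)%:R ^+ 2.
Proof. by rewrite /quad_pot; case: ifP => _; rewrite ?sqr_ge0 // gerBl sqr_ge0. Qed.

Lemma block_avg_quad_pot lo hi : (lo <= hi <= 5 * k)%N ->
  block_avg quad_pot lo hi = (5 * k)%:R ^+ 2 - block_avg (fun u => u%:R ^+ 2) lo hi.
Proof.
move=> /andP[le_lo_hi le_hi5k]; rewrite /block_avg.
rewrite (eq_big_nat _ _ (F2 := fun u => (5 * k)%:R ^+ 2 - u%:R ^+ 2)); last first.
  by move=> u /andP[_ u_le]; rewrite quad_potE //; lia.
rewrite big_split /= sumrN sumr_const_nat subSn // mulrBl.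
by rewrite -(mulr_natr ((5 * k)%:R ^+ 2)) mulfK // pnatr_eq0.
Qed.

Lemma interior_quad_pot_le z : (1 <= z <= 4 * k)%N ->
  \sum_(maxn 1 (z + 1 - k) <= i < z.+1) (block_avg quad_pot i (i + k - 1) - quad_pot z)
  <= (minn z k)%:R * z%:R * ((minn z k)%:R - k%:R) - (minn z k)%:R * block_var.
Proof.
move=> z_in; set n := minn z k; set a := maxn 1 (z + 1 - k).
have z_end : z.+1 = (a + n)%N by rewrite /a /n; lia.
have aE : a%:R = z%:R + 1 - n%:R :> R.
  have : (a + n)%:R = z.+1%:R :> R by rewrite -z_end.
  by rewrite natrD -natr1; lra.
(* [z^2 - m^2 <= 2 z (z - m)] for the block mean [m], then sum the affine bound *)
apply: (@le_trans _ _ (\sum_(a <= i < a + n)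
    (2 * z%:R ^+ 2 - z%:R * (k%:R - 1) - block_var - 2 * z%:R * i%:R))).
  rewrite z_end; apply: ler_sum_nat => i /andP[a_le_i i_lt].
  rewrite block_avg_quad_pot ?block_avg_sqr ?quad_potE; try by rewrite /a in a_le_i; lia.
  have := sqr_ge0 (i%:R + (k%:R - 1) / 2 - z%:R : R); nra.
rewrite big_split /= sumrN sumr_const_nat addKn -big_distrr /=.
have := sum_nat_id R a n; rewrite aE => sum_i.
set S := \sum_(a <= i < a + n) _ in sum_i *.
nra.
Qed.

Lemma Sk_gen_quad_pot z : (1 <= z <= 4 * k)%N ->
  Sk_gen quad_pot z <= - (minn z k)%:R * block_var.
Proof.
move=> z_in; rewrite Sk_gen_left //.
have boundary : \sum_(2 <= j < k)
    (if (z <= j)%N then d j * (block_avg quad_pot 1 j - quad_pot z) else 0)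
    <= z%:R ^+ 2 *+ (k - maxn 2 z).
  rewrite -sum_nat_ge_const; apply: ler_sum_nat => j /andP[j_ge2 j_ltk].
  case: ifP => // le_zj.
  rewrite block_avg_quad_pot ?quad_potE; try lia.
  have := d01 (j := j) ltac:(lia).
  have : 0 <= block_avg (fun u => u%:R ^+ 2) 1 j.
    by rewrite /block_avg divr_ge0 // sumr_ge0 // => u _; apply: sqr_ge0.
  nra.
apply: le_trans (lerD (interior_quad_pot_le z_in) boundary) _.
have var_ge0 := ltW block_var_gt0.
have [lt_zk | le_kz] := ltnP z k.
- rewrite -(mulr_natr (z%:R ^+ 2)) natrB ?geq_max; last by lia.
  have : (maxn 2 z)%:R >= (z%:R : R) by rewrite ler_nat leq_maxr.
  nra.
- have -> : (k - maxn 2 z)%N = 0%N by lia.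
  by rewrite mulr0n addr0 subrr mulr0 add0r mulNr.
Qed.

Lemma Sk_gen_indicator x z : (k <= x)%N -> (1 <= z <= 4 * k)%N ->
  Sk_gen (fun w => (w == x)%:R) z <= (minn z k)%:R * (k%:R^-1 - (z == x)%:R).
Proof.
move=> le_kx z_in; rewrite Sk_gen_left //.
have interior : \sum_(maxn 1 (z + 1 - k) <= i < z.+1)
      (block_avg (fun w => (w == x)%:R) i (i + k - 1) - (z == x)%:R)
    <= \sum_(maxn 1 (z + 1 - k) <= i < z.+1) (k%:R^-1 - (z == x)%:R).
  apply: ler_sum_nat => i _; rewrite lerD2r /block_avg.
  have -> : (i + k - 1 - i).+1 = k by lia.
  by rewrite -[leRHS]mul1r ler_wpM2r ?invr_ge0 ?sum_nat_indicator_le1.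
have boundary : \sum_(2 <= j < k)
    (if (z <= j)%N then d j * (block_avg (fun w => (w == x)%:R) 1 j - (z == x)%:R) else 0) <= 0.
  rewrite big_nat_cond; apply: sumr_le0 => j /andP[/andP[j_ge2 j_ltk] _]; case: ifP => // _.
  have -> : block_avg (fun w => (w == x)%:R) 1 j = 0.
    rewrite /block_avg big1_seq ?mul0r // => u /andP[_]; rewrite mem_index_iota => u_in.
    by case: eqP => // u_x; lia.
  case/andP: (d01 (j := j) ltac:(lia)) => d_ge0 _.
  by rewrite sub0r mulrN oppr_le0 mulr_ge0.
apply: le_trans (lerD interior boundary) _.
rewrite addr0 sumr_const_nat mulr_natl.
by have -> : (z.+1 - maxn 1 (z + 1 - k))%N = minn z k by lia.
Qed.

Lemma Sk_gen_far M z : (0 < M <= k)%N -> (1 <= z <= 4 * k)%N ->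
  Sk_gen (fun w => (M%:R * block_var)^-1 * quad_pot w) z <= - (M < z)%:R.
Proof.
move=> M_in z_in; have var_gt0 := block_var_gt0.
have M_gt0 : (0 : R) < M%:R by rewrite ltr0n; lia.
rewrite Sk_genZ; apply: le_trans (ler_wpM2l _ (Sk_gen_quad_pot z_in)) _.
  by rewrite invr_ge0 mulr_ge0 ?ltW.
have -> : (M%:R * block_var)^-1 * (- (minn z k)%:R * block_var) = - ((minn z k)%:R / M%:R).
  by field; rewrite !gt_eqF.
rewrite lerN2; case: ltnP => [lt_Mz | _]; last by rewrite divr_ge0.
by rewrite ler_pdivlMr // mul1r ler_nat; lia.
Qed.

Lemma Sk_gen_near x z : (k <= x)%N -> (1 <= z <= 4 * k)%N ->
  Sk_gen (fun w => (k%:R ^+ 2 * block_var)^-1 * quad_pot w + k%:R^-1 * (w == x)%:R) z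
  <= - (z == x)%:R.
Proof.
move=> le_kx z_in; have var_gt0 := block_var_gt0.
have k_gt0 : (0 : R) < k%:R by rewrite ltr0n; lia.
rewrite Sk_genD !Sk_genZ.
apply: le_trans (lerD (ler_wpM2l _ (Sk_gen_quad_pot z_in))
                      (ler_wpM2l _ (Sk_gen_indicator le_kx z_in))) _.
- by rewrite invr_ge0 mulr_ge0 ?ltW ?exprn_gt0.
- by rewrite invr_ge0 ltW.
have -> : (k%:R ^+ 2 * block_var)^-1 * (- (minn z k)%:R * block_var)
    + k%:R^-1 * ((minn z k)%:R * (k%:R^-1 - (z == x)%:R))
    = - ((minn z k)%:R / k%:R * (z == x)%:R).
  by field; rewrite !gt_eqF ?exprn_gt0.
rewrite lerN2; case: eqP => [-> | _]; last by rewrite mulr0.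
by rewrite mulr1 (minn_idPr le_kx) divff ?gt_eqF.
Qed.

Lemma Sk_time_above_le M x n : (0 < M <= k)%N -> (1 <= x <= 4 * k)%N ->
  \sum_(0 <= m < n) iter m (kact (4 * k) K) (fun u => (M < u)%:R) x
  <= rate * ((5 * k)%:R ^+ 2 / (M%:R * block_var)).
Proof.
move=> M_in x_in; have rate_gt0 := Sk_total_rate_gt0.
have le_4kN : (4 * k <= N)%N by lia.
have Mc_gt0 : 0 < M%:R * block_var by rewrite mulr_gt0 ?block_var_gt0 // ltr0n; lia.
set V := fun w => (M%:R * block_var)^-1 * quad_pot w.
have V_ge0 u : 0 <= V u by rewrite mulr_ge0 ?invr_ge0 ?quad_pot_ge0 ?(ltW Mc_gt0).
apply: (@le_trans _ _ (rate * V x)).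
  apply: (@sum_iter_kact_le _ _ _ Sk_kernel_ge0 (fun u => rate * V u)) => // [u _ | u u_in].
    by rewrite mulr_ge0 ?(ltW rate_gt0).
  by apply: (@Sk_kact_drift _ V (fun u => (M < u)%:R)) => //; apply: Sk_gen_far.
by rewrite ler_wpM2l ?(ltW rate_gt0) // /V mulrC ler_wpM2r ?quad_pot_le // invr_ge0 ltW.
Qed.

Lemma Sk_visits_le x u n : (k <= x)%N -> (1 <= u <= 4 * k)%N ->
  \sum_(0 <= m < n) iter m (kact (4 * k) K) (fun w => (w == x)%:R) u
  <= rate * ((5 * k)%:R ^+ 2 / (k%:R ^+ 2 * block_var) + k%:R^-1).
Proof.
move=> le_kx u_in; have rate_gt0 := Sk_total_rate_gt0.
have le_4kN : (4 * k <= N)%N by lia.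
have kc_gt0 : 0 < k%:R ^+ 2 * block_var.
  by rewrite mulr_gt0 ?block_var_gt0 // exprn_gt0 // ltr0n; lia.
set V := fun w => (k%:R ^+ 2 * block_var)^-1 * quad_pot w + k%:R^-1 * (w == x)%:R.
have V_ge0 w : 0 <= V w by rewrite addr_ge0 ?mulr_ge0 ?invr_ge0 ?quad_pot_ge0 ?(ltW kc_gt0).
apply: (@le_trans _ _ (rate * V u)).
  apply: (@sum_iter_kact_le _ _ _ Sk_kernel_ge0 (fun w => rate * V w)) => // [w _ | w w_in].
    by rewrite mulr_ge0 ?(ltW rate_gt0).
  by apply: (@Sk_kact_drift _ V (fun w => (w == x)%:R)) => //; apply: Sk_gen_near.
rewrite ler_wpM2l ?(ltW rate_gt0) // lerD //.
  by rewrite mulrC ler_wpM2r ?quad_pot_le // invr_ge0 ltW.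
by rewrite ler_piMr ?invr_ge0 // lern1 leq_b1.
Qed.

Lemma Sk_surv_series_le x M n : (k <= x <= 2 * k)%N -> (0 < M <= k)%N ->
  \sum_(0 <= m < n) Sk_surv N k d (4 * k) m x / rate <=
  (5 * k)%:R ^+ 2 / (M%:R * block_var)
  + M%:R * ((5 * k)%:R ^+ 2 / (k%:R ^+ 2 * block_var) + k%:R^-1).
Proof.
move=> x_range M_in; have rate_gt0 := Sk_total_rate_gt0.
have x_in : (1 <= x <= 4 * k)%N by lia.
have survE m : Sk_surv N k d (4 * k) m x = iter m (kact (4 * k) K) (fun u => (M < u)%:R) x
    + kdot (4 * k) (fun u => (u <= M)%:R) (iter m (kact (4 * k) K) (fun w => (w == x)%:R)).
  rewrite (@Sk_surv_iter (4 * k) m x); [|lia|lia].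
  by apply: (iter_kact_split Sk_kernel_sym m x_in) => u _; case: ltnP; rewrite ?addr0 ?add0r.
rewrite -big_distrl ler_pdivrMr //= (eq_bigr _ (fun m _ => survE m)) big_split /= mulrDl.
apply: lerD; first by rewrite [leRHS]mulrC Sk_time_above_le.
rewrite /kdot exchange_big /=.
apply: (@le_trans _ _ (\sum_(1 <= u < (4 * k).+1) (u <= M)%:R
    * (rate * ((5 * k)%:R ^+ 2 / (k%:R ^+ 2 * block_var) + k%:R^-1)))).
  apply: ler_sum_nat => u u_in; rewrite -big_distrr /= ler_wpM2l //.
  by apply: Sk_visits_le; lia.
have count_le_M : \sum_(1 <= i < (4 * k).+1) ((i <= M)%:R : R) = M%:R.
  rewrite (eq_big_nat _ _ (F2 := fun i => if (1 <= i <= M)%N then 1 else 0)).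
    by rewrite sum_nat_window ?sumr_const_nat ?subn1 //; lia.
  by move=> i /andP[-> _]; case: (i <= M)%N.
by rewrite -big_distrl /= count_le_M mulrCA mulrC.
Qed.

Lemma Sk_exp_hit_gt_le x : (k <= x <= 2 * k)%N ->
  (Sk_exp_hit_gt N k d (4 * k) x <= (1201 / Num.sqrt k%:R)%:E)%E.
Proof.
move=> x_range; set M := Num.truncn (Num.sqrt (k%:R : R)).
have M_s := truncn_itv (sqrtr_ge0 (k%:R : R)); rewrite -/M in M_s.
have M_in : (0 < M <= k)%N.
  case/andP: M_s => M_le_s s_lt_M1; have k_ge2R : (2 : R) <= k%:R by rewrite ler_nat.
  have s2 : Num.sqrt (k%:R : R) ^+ 2 = k%:R by rewrite sqr_sqrtr ?ler0n.
  have s_ge1 : 1 <= Num.sqrt (k%:R : R) by rewrite -[leLHS]sqrtr1 ler_sqrt //; lra.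
  have s_le_k : Num.sqrt (k%:R : R) <= k%:R by rewrite -[leRHS]s2 ler_eXnr.
  apply/andP; split; last by rewrite -(@ler_nat R); lra.
  by rewrite -ltnS -(@ltr1n R); lra.
rewrite /Sk_exp_hit_gt; apply: lime_le.
  apply: is_cvg_nneseries => n _ _.
  by rewrite lee_fin divr_ge0 ?Sk_surv_ge0 ?(ltW Sk_total_rate_gt0).
apply: nearW => n; rewrite sumEFin lee_fin.
exact: le_trans (Sk_surv_series_le n x_range M_in) (potential_bound_sqrt_le k_ge2 M_s).
Qed.

End SkShuffle.

Theorem lemma5p4 (R : realType) :
  exists C : R, 0 < C /\
  forall (k : nat -> nat) (delta : nat -> nat -> R),
    (forall N, (2 <= k N)%N) ->
    (fun N : nat => (k N)%:R / N%:R : R) @ \oo --> (0 : R) ->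
    (forall N j, (2 <= j <= k N - 1)%N -> 0 <= delta N j <= 1) ->
    exists N0 : nat, forall N : nat, (N0 <= N)%N ->
      forall x : nat, (k N <= x <= 2 * k N)%N ->
        (Sk_exp_hit_gt N (k N) (delta N) (4 * k N) x
           <= (C / Num.sqrt (k N)%:R)%:E)%E.
Proof.
exists 1201; split; first lra.
move=> k delta k_ge2 k_small delta01.
have [N0 _ kN_small] := cvgr_lt (0 : R) k_small (5^-1) ltac:(by rewrite invr_gt0).
exists N0.+1 => N le_N0N x x_range.
have N_gt5k : (5 * k N < N)%N.
  have N_gt0 : (0 : R) < N%:R by rewrite ltr0n; lia.
  have := kN_small N (ltnW le_N0N); rewrite ltr_pdivrMr // mulrC ltr_pdivlMr // => lt_kN.
  by rewrite -(@ltr_nat R) natrM; lra.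
exact: (Sk_exp_hit_gt_le (k_ge2 N) N_gt5k (delta01 N)).
Qed.
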